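(* Let $N$ and $M$ be sub-sound WF nets with disjoint node sets and let $n$ be a node of $N$ such that either $n$ is a place and $M$ is a pWF net, or $n$ is a transition and $M$ is a tWF net. Then $N\otimes_n M$ is a sub-sound WF net.
   Context: Petri nets and markings. A Petri net is a triple $(P,T,F)$ with $P$ a finite set of places, $T$ a finite set of transitions, $P\cap T=\emptyset$, and $F\subseteq (P\times T)\cup(T\times P)$. For a node $x$, $\bullet x=\{y\mid (y,x)\in F\}$, $x\bullet=\{y\mid (x,y)\in F\}$. A marking is a multiset over $P$ (a function $P\to\mathbb N$); sets of places are identified with bags of multiplicity one, $+,-,\le$ are pointwise, and $k.m$ is the sum of $k$ copies of $m$. Transition $t$ is enabled at $m$ iff $\bullet t\le m$, firing gives $m-\bullet t+t\bullet$, and $m\xrightarrow{*}m'$ denotes reachability by a finite (possibly empty) firing sequence. Workflow nets. A pWF net is $(P,T,F,I,O)$ with $(P,T,F)$ a Petri net, $I,O\subseteq P$ non-empty, every node reachable by a directed path from some node of $I$, and some node of $O$ reachable from every node. A tWF net is the same with $I,O$ non-empty subsets of $T$. Input nodes may have incoming edges and output nodes outgoing edges. A WF net is a pWF or tWF net. The place-completion $\mathrm{pc}(N)$ of a tWF net $N=(P,T,F,I,O)$ is obtained by adding two fresh places $p_i,p_o$ with edges $(p_i,t)$ for all $t\in I$ and $(t,p_o)$ for all $t\in O$, and taking input set $\{p_i\}$ and output set $\{p_o\}$. Sub-soundness. A pWF net is sub-sound if for all integers $k\ge k'\ge 0$ and every marking $m'$: if $k.I\xrightarrow{*}m'+k'.O$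 then $m'\xrightarrow{*}(k-k').O$. A tWF net is sub-sound iff its place-completion is. Substitution. Let $N=(P,T,F,I,O)$ and $M=(P',T',F',I',O')$ be WF nets with disjoint node sets. If $p\in P$ and $M$ is a pWF net, $N\otimes_p M$ is obtained from $N$ by deleting $p$ and all edges incident to $p$, adding all nodes and edges of $M$, adding an edge $(t,p')$ for each $t\in\bullet_N p$ and each $p'\in I'$, and an edge $(p',t)$ for each $p'\in O'$ and each $t\in p\bullet_N$; its input set is $(I\setminus\{p\})\cup I'$ if $p\in I$ and $I$ otherwise, and its output set is $(O\setminus\{p\})\cup O'$ if $p\in O$ and $O$ otherwise. If $t\in T$ and $M$ is a tWF net, $N\otimes_t M$ is defined analogously: delete $t$ and its edges, add $M$, add $(q,t')$ for each $q\in\bullet_N t$, $t'\in I'$, and $(t',q)$ for each $t'\in O'$, $q\in t\bullet_N$, with input/output sets updated in the same way. *)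

From HB Require Import structures.
From mathcomp Require Import all_boot.
Set Implicit Arguments.
Unset Strict Implicit.
Unset Printing Implicit Defensive.

(* Nodes of all nets live in a common finite universe V; a net is given by
   its (finite) place and transition sets, its flow relation and its
   input/output sets. *)
Record wfnet (V : finType) := WFNet {
  pl : {set V};
  tr : {set V};
  fl : rel V;
  inp : {set V};
  outp : {set V}
}.

Definition nodes (V : finType) (N : wfnet V) : {set V} := pl N :|: tr N.

Definition is_petri (V : finType) (N : wfnet V) : Prop :=
  pl N :&: tr N = set0 /\
  (forall x y, fl N x y ->
     (x \in pl N /\ y \in tr N) \/ (x \in tr N /\ y \in pl N)).

Definition wf_connected (V : finType) (N : wfnet V) : Prop :=
  (forall x, x \in nodes N -> exists2 i, i \in inp N & connect (fl N) i x) /\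
  (forall x, x \in nodes N -> exists2 o, o \in outp N & connect (fl N) x o).

Definition is_pWF (V : finType) (N : wfnet V) : Prop :=
  is_petri N /\ inp N != set0 /\ outp N != set0 /\
  inp N \subset pl N /\ outp N \subset pl N /\ wf_connected N.

Definition is_tWF (V : finType) (N : wfnet V) : Prop :=
  is_petri N /\ inp N != set0 /\ outp N != set0 /\
  inp N \subset tr N /\ outp N \subset tr N /\ wf_connected N.

Definition is_WF (V : finType) (N : wfnet V) : Prop := is_pWF N \/ is_tWF N.

(* Markings: multisets of nodes (only places ever carry tokens). *)
Definition marking (V : finType) := V -> nat.

Definition step (V : finType) (N : wfnet V) (m m' : marking V) : Prop :=
  exists2 t, t \in tr N &
    (forall v, (fl N v t : nat) <= m v) /\
    (forall v, m' v = m v - (fl N v t : nat) + (fl N t v : nat)).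

Inductive reach (V : finType) (N : wfnet V) : marking V -> marking V -> Prop :=
| reach_refl m m' : (forall v, m v = m' v) -> reach N m m'
| reach_step m m1 m' : step N m m1 -> reach N m1 m' -> reach N m m'.

Definition kset (V : finType) (k : nat) (S : {set V}) : marking V :=
  fun v => k * (v \in S).

Definition madd (V : finType) (m1 m2 : marking V) : marking V :=
  fun v => m1 v + m2 v.

Definition psub_sound (V : finType) (N : wfnet V) : Prop :=
  forall (k k' : nat) (m' : marking V), k' <= k ->
    reach N (kset k (inp N)) (madd m' (kset k' (outp N))) ->
    reach N m' (kset (k - k') (outp N)).

(* place completion of a tWF net: fresh places p_i = inr false, p_o = inr true *)
Definition pc (V : finType) (N : wfnet V) : wfnet (V + bool)%type :=
  {| pl := [set x | match x with inl v => v \in pl N | inr _ => true end];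
     tr := [set x | match x with inl v => v \in tr N | inr _ => false end];
     fl := fun x y =>
       match x, y with
       | inl a, inl b => fl N a b
       | inr false, inl t => t \in inp N
       | inl t, inr true => t \in outp N
       | _, _ => false
       end;
     inp := [set inr false];
     outp := [set inr true] |}.

Definition sub_sound (V : finType) (N : wfnet V) : Prop :=
  (is_pWF N -> psub_sound N) /\ (is_tWF N -> psub_sound (pc N)).

(* substitution N ⊗_n M (uniform for places and transitions) *)
Definition subst (V : finType) (N : wfnet V) (n : V) (M : wfnet V) : wfnet V :=
  {| pl := (pl N :\ n) :|: pl M;
     tr := (tr N :\ n) :|: tr M;
     fl := fun x y =>
       [|| [&& fl N x y, x != n & y != n],
           fl M x y,
           fl N x n && (y \in inp M)
         | (x \in outp M) && fl N n y];
     inp := if n \in inp N then (inp N :\ n) :|: inp M else inp N;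
     outp := if n \in outp N then (outp N :\ n) :|: outp M else outp N |}.

From HB Require Import structures.
From mathcomp Require Import all_boot.
From mathcomp Require Import zify.
From Stdlib Require Import FunctionalExtensionality.
Set Implicit Arguments.
Unset Strict Implicit.
Unset Printing Implicit Defensive.

(* Structure: C is a Petri net, and every path of N through n can be rerouted
   along an input-output path of M, so C is again a WF net (subst_pWF,
   subst_tWF).

   Sub-soundness is proved by an invariant on the reachable markings of C:
   - place case (place_sound): a reachable marking is explained by a run of N
     leaving j - l tokens on n, together with a run of M started j times of
     which l instances have terminated (place_inv);
   - transition case (trans_sound): the same with pc(M), the unfinished
     instances being firings of n whose production is still pending
     (trans_inv).
   From a reachable m' + k'.O, sub-soundness of M first lets all running
   instances terminate, and sub-soundness of N then finishes the explaining
   run, each step of N being simulated in C.  When N itself is a tWF net,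
   pc(N ⊗_n M) is pc(N) ⊗_n M up to renaming the nodes of M, and
   sub-soundness transfers along such renamings (transport). *)

(* Token-count arithmetic is closed by lia; hypotheses about sets are
   irrelevant to it and only slow the zify preprocessing down. *)
Ltac count_lia := repeat match goal with
 | H : is_true (_ \subset _) |- _ => clear H
 | H : is_true [disjoint _ & _] |- _ => clear H
 | H : is_true (_ != set0) |- _ => clear H end; lia.

Lemma marking_ext (X : finType) (a b : marking X) : (forall v, a v = b v) -> a = b.
Proof. exact: functional_extensionality. Qed.

Section Reachability.
Variables (X : finType) (A : wfnet X).

Lemma reach_self m : reach A m m.
Proof. by apply: reach_refl. Qed.

Lemma reach_trans a b c : reach A a b -> reach A b c -> reach A a c.
Proof.
elim=> [m m' E|m m1 m' S _ IH] H.
- by rewrite (marking_ext E).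
- exact: reach_step S (IH H).
Qed.

Lemma step_reach a b : step A a b -> reach A a b.
Proof. by move=> S; apply: reach_step S (reach_self _). Qed.

Lemma reach_invariant (P : marking X -> Prop) :
  (forall a b, step A a b -> P a -> P b) ->
  forall a b, reach A a b -> P a -> P b.
Proof.
move=> H a b; elim=> [m m' E|m m1 m' S _ IH] Pm.
- by rewrite -(marking_ext E).
- exact: IH (H _ _ S Pm).
Qed.

Lemma step_madd a b z : step A a b -> step A (madd a z) (madd b z).
Proof.
case=> t Ht [H1 H2]; exists t => //; split=> v; rewrite /madd.
- by have := H1 v; lia.
- by rewrite H2; have := H1 v; lia.
Qed.

Lemma reach_inert w :
  (forall t, t \in tr A -> fl A w t = false /\ fl A t w = false) ->
  forall a b, reach A a b -> a w = b w.
Proof.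
move=> H a b R.
apply: (@reach_invariant (fun m => a w = m w) _ a b R) => [a' b' [t Ht [_ H2]] ->|//].
by rewrite H2; case: (H t Ht) => -> ->; lia.
Qed.

End Reachability.

Lemma reach_sim (X Y : finType) (A : wfnet X) (B : wfnet Y)
    (f : marking X -> marking Y) :
  (forall a b, step A a b -> reach B (f a) (f b)) ->
  forall a b, reach A a b -> reach B (f a) (f b).
Proof.
move=> H a b; elim=> [m m' E|m m1 m' S _ IH].
- by rewrite (marking_ext E); exact: reach_self.
- exact: reach_trans (H _ _ S) IH.
Qed.

Lemma reach_madd (X : finType) (A : wfnet X) a b z :
  reach A a b -> reach A (madd a z) (madd b z).
Proof.
apply: (reach_sim (f := fun m => madd m z)) => a' b' S.
exact/step_reach/step_madd.
Qed.

Lemma kset_add (X : finType) (S : {set X}) a b :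
  kset (a + b) S = madd (kset a S) (kset b S).
Proof. by apply: marking_ext => v; rewrite /madd /kset; lia. Qed.

Definition has_postsets (X : finType) (A : wfnet X) : Prop :=
  forall t, t \in tr A -> exists y, fl A t y.

Section SubSoundness.
Variables (X : finType) (A : wfnet X).
Hypothesis soundA : psub_sound A.

Lemma reach_nonzero : has_postsets A ->
  forall a b, reach A a b -> (exists v, 0 < a v) -> exists v, 0 < b v.
Proof.
move=> Hp a b R; apply: (@reach_invariant _ A (fun m => exists v, 0 < m v) _ a b R).
move=> a' b' [t Ht [H1 H2]] _.
by have [y Hy] := Hp t Ht; exists y; rewrite H2 Hy; lia.
Qed.

(* A sub-sound net started with J tokens never delivers more than J
   tokens to its output: the surplus could never be consumed. *)
Lemma sound_output_bound J L mu : outp A != set0 -> has_postsets A ->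
  reach A (kset J (inp A)) (madd mu (kset L (outp A))) -> L <= J.
Proof.
move=> Hne Hp R; rewrite leqNgt; apply/negP => HLJ.
have R' : reach A (kset J (inp A))
            (madd (madd mu (kset (L - J) (outp A))) (kset J (outp A))).
  suff -> : madd (madd mu (kset (L - J) (outp A))) (kset J (outp A)) =
            madd mu (kset L (outp A)) by [].
  by apply: marking_ext => v; rewrite /madd /kset; lia.
have := soundA (leqnn J) R'; rewrite subnn => R2.
have [o Ho] := set0Pn _ Hne.
have Hnz : exists v, 0 < madd mu (kset (L - J) (outp A)) v.
  by exists o; rewrite /madd /kset Ho; lia.
by have [v] := reach_nonzero Hp R2 Hnz; rewrite /kset.
Qed.

Lemma sound_single_run (b : bool) : reach A (kset b (inp A)) (kset b (outp A)).
Proof.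
case: b; last exact: reach_self.
have := soundA (k := 1) (m' := kset 1 (inp A)) (leq0n 1); rewrite subn0; apply.
suff -> : madd (kset 1 (inp A)) (kset 0 (outp A)) = kset 1 (inp A) by exact: reach_self.
by apply: marking_ext => v; rewrite /madd /kset; lia.
Qed.

End SubSoundness.
Lemma pl_nodes (X : finType) (A : wfnet X) x : x \in pl A -> x \in nodes A.
Proof. by rewrite /nodes inE => ->. Qed.
Lemma tr_nodes (X : finType) (A : wfnet X) x : x \in tr A -> x \in nodes A.
Proof. by rewrite /nodes inE => ->; rewrite orbT. Qed.

Lemma madd_assoc (X : finType) (a b c : marking X) :
  madd (madd a b) c = madd a (madd b c).
Proof. by apply: marking_ext => v; rewrite /madd addnA. Qed.

Section PetriFacts.
Variables (X : finType) (A : wfnet X).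
Hypothesis petriA : is_petri A.

Lemma petri_pl_tr x : x \in pl A -> x \in tr A -> False.
Proof.
case: petriA => H _ Hp Ht.
have : x \in pl A :&: tr A by rewrite inE Hp Ht.
by rewrite H inE.
Qed.

Lemma petri_fl a b : fl A a b ->
  ((a \in pl A) && (b \in tr A)) || ((a \in tr A) && (b \in pl A)).
Proof. by case: petriA => _ H /H [[-> ->]|[-> ->]]; rewrite ?orbT. Qed.

Lemma petri_fl_nodes a b : fl A a b -> (a \in nodes A) && (b \in nodes A).
Proof.
move/petri_fl; rewrite /nodes !inE.
by case/orP => /andP[-> ->]; rewrite ?orbT.
Qed.

Lemma petri_fl_from_tr a b : fl A a b -> a \in tr A -> b \in pl A.
Proof.
move=> F Ha; case/orP: (petri_fl F) => /andP[Hp Hb] //.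
by case: (petri_pl_tr Hp Ha).
Qed.

Lemma petri_fl_from_pl a b : fl A a b -> a \in pl A -> b \in tr A.
Proof.
move=> F Ha; case/orP: (petri_fl F) => /andP[Ht Hb] //.
by case: (petri_pl_tr Ha Ht).
Qed.

Lemma petri_fl_to_tr a b : fl A a b -> b \in tr A -> a \in pl A.
Proof.
move=> F Hb; case/orP: (petri_fl F) => /andP[Ha Hp] //.
by case: (petri_pl_tr Hp Hb).
Qed.

Lemma petri_fl_to_pl a b : fl A a b -> b \in pl A -> a \in tr A.
Proof.
move=> F Hb; case/orP: (petri_fl F) => /andP[Ha Ht] //.
by case: (petri_pl_tr Hb Ht).
Qed.

Lemma petri_no_loop x : fl A x x = false.
Proof.
apply/negP => F; case/orP: (petri_fl F) => /andP[H1 H2].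
  case: (petri_pl_tr H1 H2).
case: (petri_pl_tr H2 H1).
Qed.

End PetriFacts.

Lemma first_step (X : finType) (e : rel X) a x : connect e a x -> x != a ->
  exists2 z, e a z & connect e z x.
Proof.
move/connectP => [[|z p] /= Hp ->]; first by rewrite eqxx.
by move: Hp => /andP[H1 H2] _; exists z => //; apply/connectP; exists p.
Qed.

Lemma last_step (X : finType) (e : rel X) a x : connect e a x -> a != x ->
  exists p, [/\ connect e a p, e p x & p != x].
Proof.
move/connectP => [p]; elim: p a => [|y p IH] a /=; first by move=> _ ->; rewrite eqxx.
move=> /andP[Hay Hp] Hx Hax.
case: (eqVneq y x) => [Eyx|Hyx]; first by exists a; split => //; rewrite -Eyx.
have [q [Cq Fq Nq]] := IH y Hp Hx Hyx.
by exists q; split => //; exact: connect_trans (connect1 Hay) Cq.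
Qed.

Definition io_kind (V : finType) (N M : wfnet V) (n : V) : Prop :=
  (n \in pl N /\ inp M \subset pl M /\ outp M \subset pl M) \/
  (n \in tr N /\ inp M \subset tr M /\ outp M \subset tr M).

Definition insideM (V : finType) (M : wfnet V) (m : marking V) : marking V :=
  fun v => if v \in nodes M then m v else 0.
Definition outsideM (V : finType) (M : wfnet V) (m : marking V) : marking V :=
  fun v => if v \in nodes M then 0 else m v.

Lemma split_inside_outside (V : finType) (M : wfnet V) (m : marking V) :
  m = madd (outsideM M m) (insideM M m).
Proof.
by apply: marking_ext => v; rewrite /madd /outsideM /insideM; case: (v \in nodes M); lia.
Qed.

Section Substitution.
Variables (V : finType) (N M : wfnet V) (n : V).
Hypotheses (petriN : is_petri N) (petriM : is_petri M)
  (disjNM : [disjoint nodes N & nodes M]) (kindNM : io_kind N M n)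
  (inpN_nodes : inp N \subset nodes N) (outpN_nodes : outp N \subset nodes N).

Local Notation C := (subst N n M).

Lemma n_nodesN : n \in nodes N.
Proof. by case: kindNM => [[H _]|[H _]]; rewrite /nodes inE H ?orbT. Qed.

Lemma nodesN_notM x : x \in nodes N -> (x \in nodes M) = false.
Proof. exact: disjointFr. Qed.

Lemma n_notM : (n \in nodes M) = false.
Proof. exact: nodesN_notM n_nodesN. Qed.

Lemma inpM_pl : n \in pl N -> inp M \subset pl M.
Proof. by case: kindNM => [[_ [H _]]|[Ht _]] // Hp; case: (petri_pl_tr petriN Hp Ht). Qed.
Lemma outpM_pl : n \in pl N -> outp M \subset pl M.
Proof. by case: kindNM => [[_ [_ H]]|[Ht _]] // Hp; case: (petri_pl_tr petriN Hp Ht). Qed.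
Lemma inpM_tr : n \in tr N -> inp M \subset tr M.
Proof. by case: kindNM => [[Hp _]|[_ [H _]]] // Ht; case: (petri_pl_tr petriN Hp Ht). Qed.
Lemma outpM_tr : n \in tr N -> outp M \subset tr M.
Proof. by case: kindNM => [[Hp _]|[_ [_ H]]] // Ht; case: (petri_pl_tr petriN Hp Ht). Qed.

Lemma inpM_nodes x : x \in inp M -> x \in nodes M.
Proof.
by case: kindNM => [[_ [H _]]|[_ [H _]]] /(subsetP H); rewrite /nodes inE => ->; rewrite ?orbT.
Qed.

Lemma outpM_nodes x : x \in outp M -> x \in nodes M.
Proof.
by case: kindNM => [[_ [_ H]]|[_ [_ H]]] /(subsetP H); rewrite /nodes inE => ->; rewrite ?orbT.
Qed.

Lemma notM_inpM v : (v \in nodes M) = false -> (v \in inp M) = false.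
Proof. by move=> H; apply/negP => /inpM_nodes; rewrite H. Qed.
Lemma notM_outpM v : (v \in nodes M) = false -> (v \in outp M) = false.
Proof. by move=> H; apply/negP => /outpM_nodes; rewrite H. Qed.
Lemma M_inpN v : v \in nodes M -> (v \in inp N) = false.
Proof. by move=> vM; apply/negP => /(subsetP inpN_nodes) /nodesN_notM; rewrite vM. Qed.
Lemma M_outpN v : v \in nodes M -> (v \in outp N) = false.
Proof. by move=> vM; apply/negP => /(subsetP outpN_nodes) /nodesN_notM; rewrite vM. Qed.

Lemma flN_M_l x y : x \in nodes M -> fl N x y = false.
Proof.
by move=> H; apply/negP => /(petri_fl_nodes petriN) /andP[/nodesN_notM]; rewrite H.
Qed.
Lemma flN_M_r x y : y \in nodes M -> fl N x y = false.
Proof.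
by move=> H; apply/negP => /(petri_fl_nodes petriN) /andP[_ /nodesN_notM]; rewrite H.
Qed.
Lemma flM_notM_l x y : (x \in nodes M) = false -> fl M x y = false.
Proof. by move=> H; apply/negP => /(petri_fl_nodes petriM) /andP[]; rewrite H. Qed.
Lemma flM_notM_r x y : (y \in nodes M) = false -> fl M x y = false.
Proof. by move=> H; apply/negP => /(petri_fl_nodes petriM) /andP[_]; rewrite H. Qed.

Lemma flC_from_n y : fl C n y = false.
Proof.
by rewrite /= eqxx (flM_notM_l _ n_notM) (petri_no_loop petriN) (notM_outpM n_notM) /= andbF.
Qed.
Lemma flC_to_n x : fl C x n = false.
Proof.
by rewrite /= eqxx (flM_notM_r _ n_notM) (notM_inpM n_notM) (petri_no_loop petriN) /= !andbF.
Qed.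

Lemma flC_M_in t v : t \in nodes M ->
  fl C v t = fl M v t || (fl N v n && (t \in inp M)).
Proof. by move=> tM; rewrite /= !(flN_M_r _ tM) /= !andbF orbF. Qed.
Lemma flC_M_out t v : t \in nodes M ->
  fl C t v = fl M t v || ((t \in outp M) && fl N n v).
Proof. by move=> tM; rewrite /= !(flN_M_l _ tM). Qed.

Lemma flC_N_in t v : t \in nodes N -> t != n ->
  fl C v t = (fl N v t && (v != n)) || ((v \in outp M) && fl N n t).
Proof.
move=> tN tn; have tM := nodesN_notM tN.
rewrite /= (flM_notM_r _ tM) (notM_inpM tM) tn /= andbF andbT.
by case: (fl N v t).
Qed.
Lemma flC_N_out t v : t \in nodes N -> t != n ->
  fl C t v = (fl N t v && (v != n)) || (fl N t n && (v \in inp M)).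
Proof.
move=> tN tn; have tM := nodesN_notM tN.
rewrite /= (flM_notM_l _ tM) (notM_outpM tM) tn /= orbF.
by case: (fl N t v).
Qed.

Lemma inpC_M v : v \in nodes M -> (v \in inp C) = (n \in inp N) && (v \in inp M).
Proof. by move=> vM; rewrite /=; case: ifP => Hn; rewrite ?inE M_inpN ?andbF. Qed.
Lemma inpC_N v : (v \in nodes M) = false -> v != n -> (v \in inp C) = (v \in inp N).
Proof. by move=> vM vn; rewrite /=; case: ifP => // _; rewrite !inE vn notM_inpM ?orbF. Qed.
Lemma inpC_n : (n \in inp C) = false.
Proof. by rewrite /=; case: ifP => Hn; rewrite ?inE ?eqxx ?(notM_inpM n_notM). Qed.
Lemma outpC_M v : v \in nodes M -> (v \in outp C) = (n \in outp N) && (v \in outp M).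
Proof. by move=> vM; rewrite /=; case: ifP => Hn; rewrite ?inE M_outpN ?andbF. Qed.
Lemma outpC_N v : (v \in nodes M) = false -> v != n -> (v \in outp C) = (v \in outp N).
Proof. by move=> vM vn; rewrite /=; case: ifP => // _; rewrite !inE vn notM_outpM ?orbF. Qed.
Lemma outpC_n : (n \in outp C) = false.
Proof. by rewrite /=; case: ifP => Hn; rewrite ?inE ?eqxx ?(notM_outpM n_notM). Qed.

Lemma reachC_n a b : reach C a b -> a n = b n.
Proof. by apply: reach_inert => t _; rewrite flC_from_n flC_to_n. Qed.


Section PlaceCase.
Hypotheses (n_pl : n \in pl N) (outpM0 : outp M != set0) (postM : has_postsets M)
  (soundN : psub_sound N) (soundM : psub_sound M).

Lemma flC_trM_in t v : t \in tr M -> fl C v t = fl M v t.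
Proof.
move=> Ht; rewrite flC_M_in ?tr_nodes //.
suff -> : (t \in inp M) = false by rewrite andbF orbF.
by apply/negP => /(subsetP (inpM_pl n_pl)) Hp; case: (petri_pl_tr petriM Hp Ht).
Qed.
Lemma flC_trM_out t v : t \in tr M -> fl C t v = fl M t v.
Proof.
move=> Ht; rewrite flC_M_out ?tr_nodes //.
suff -> : (t \in outp M) = false by rewrite orbF.
by apply/negP => /(subsetP (outpM_pl n_pl)) Hp; case: (petri_pl_tr petriM Hp Ht).
Qed.

(* The marking of N represented by m, when c instances of M are running. *)
Definition viewN (m : marking V) (c : nat) : marking V :=
  fun v => if v \in nodes M then 0 else if v == n then c else m v.

(* Key invariant of the place case: a marking m reachable in N ⊗_n M from
   k.I is explained by a run of N putting j - l tokens on n, together with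
   a run of M from j.I in which l of the j instances have terminated and
   the rest of the tokens are the M-part of m. *)
Definition place_inv (k : nat) (m : marking V) : Prop :=
  exists j l, l <= j /\
    reach N (kset k (inp N)) (viewN m (j - l)) /\
    reach M (kset j (inp M)) (madd (insideM M m) (kset l (outp M))).

Lemma place_inv_init k : place_inv k (kset k (inp C)).
Proof.
exists (k * (n \in inp N)), 0; split => //; split.
- suff -> : viewN (kset k (inp C)) (k * (n \in inp N) - 0) = kset k (inp N).
    exact: reach_self.
  apply: marking_ext => v; rewrite /viewN /kset; case vM: (v \in nodes M).
    by rewrite M_inpN //; lia.
  by case: eqP => [->|/eqP vn]; [lia | rewrite inpC_N].
- suff -> : madd (insideM M (kset k (inp C))) (kset 0 (outp M)) =
            kset (k * (n \in inp N)) (inp M) by exact: reach_self.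
  apply: marking_ext => v; rewrite /madd /insideM /kset; case vM: (v \in nodes M).
    by rewrite inpC_M //; case: (n \in inp N); case: (v \in inp M) => /=; lia.
  by rewrite notM_inpM //; lia.
Qed.

(* Firing a transition t of N: its consumption from n is taken from the
   terminated instances of M, its production on n starts new instances. *)
Lemma place_inv_stepN k a b t : t \in tr N -> t != n ->
  (forall v, (fl C v t : nat) <= a v) ->
  (forall v, b v = a v - fl C v t + fl C t v) ->
  place_inv k a -> place_inv k b.
Proof.
move=> HtN Htn H1 H2 [j [l [Hlj [RN RM]]]].
have tN := tr_nodes HtN.
pose mu : marking V := fun v => insideM M a v - (fl N n t && (v \in outp M)).
have E1 : madd (insideM M a) (kset l (outp M)) =
          madd mu (kset (l + fl N n t) (outp M)).
  apply: marking_ext => v; rewrite /madd /kset /mu /insideM.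
  have := H1 v; rewrite flC_N_in //.
  case vO: (v \in outp M); last by rewrite andbF; count_lia.
  rewrite (outpM_nodes vO) /=; case: (fl N n t); rewrite /= ?orbT; count_lia.
rewrite E1 in RM.
have Hb := sound_output_bound soundM outpM0 postM RM.
exists (j + fl N t n), (l + fl N n t); split; first count_lia.
split.
- apply: (reach_trans RN); apply: step_reach; exists t => //; split => v;
    rewrite /viewN; case vM: (v \in nodes M).
  + by rewrite flN_M_l.
  + case: eqP => [->|/eqP vn]; first count_lia.
    by have := H1 v; rewrite flC_N_in // vn /= andbT; case: (fl N v t) => //=; count_lia.
  + by rewrite flN_M_l // flN_M_r.
  + case: eqP => [->|/eqP vn]; first count_lia.
    rewrite H2 flC_N_in // flC_N_out // vn (notM_outpM vM) (notM_inpM vM).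
    by rewrite /= !andbT !andbF !orbF.
- have RM2 := reach_madd (kset (fl N t n) (inp M)) RM.
  rewrite -kset_add in RM2.
  suff <- : madd (madd mu (kset (l + fl N n t) (outp M))) (kset (fl N t n) (inp M)) =
            madd (insideM M b) (kset (l + fl N n t) (outp M)) by [].
  apply: marking_ext => v; rewrite /madd /kset /mu /insideM.
  case vM: (v \in nodes M); last by rewrite (notM_outpM vM) (notM_inpM vM); count_lia.
  have := H1 v; rewrite H2 flC_N_in // flC_N_out // !(flN_M_l _ vM) !(flN_M_r _ vM) /=.
  case: (fl N n t); case: (fl N t n); case: (v \in outp M); case: (v \in inp M) => /=;
    count_lia.
Qed.

Lemma place_inv_stepM k a b t : t \in tr M ->
  (forall v, (fl C v t : nat) <= a v) ->
  (forall v, b v = a v - fl C v t + fl C t v) ->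
  place_inv k a -> place_inv k b.
Proof.
move=> HtM H1 H2 [j [l [Hlj [RN RM]]]].
have tM := tr_nodes HtM.
exists j, l; split => //; split.
- suff -> : viewN b (j - l) = viewN a (j - l) by [].
  apply: marking_ext => v; rewrite /viewN; case vM: (v \in nodes M) => //.
  case: eqP => // _; rewrite H2 flC_trM_in // flC_trM_out //.
  by rewrite (flM_notM_l _ vM) (flM_notM_r _ vM); count_lia.
- apply: (reach_trans RM); apply: step_reach; exists t => //; split => v;
    rewrite /madd /insideM; case vM: (v \in nodes M).
  + by have := H1 v; rewrite flC_trM_in //; count_lia.
  + by rewrite (flM_notM_l _ vM).
  + by rewrite H2 flC_trM_in // flC_trM_out //; have := H1 v; rewrite flC_trM_in //; count_lia.
  + by rewrite (flM_notM_l _ vM) (flM_notM_r _ vM); count_lia.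
Qed.

Lemma place_inv_reach k m : reach C (kset k (inp C)) m -> place_inv k m.
Proof.
move=> R; apply: (reach_invariant _ R (place_inv_init k)).
move=> a b [t]; rewrite /= !inE => /orP[/andP[tn tN]|tM] [H1 H2].
- exact: place_inv_stepN H1 H2.
- exact: place_inv_stepM H1 H2.
Qed.

Lemma reachM_C x y z : reach M x y -> reach C (madd z x) (madd z y).
Proof.
apply: (reach_sim (f := fun m => madd z m)) => a b [t Ht [H1 H2]].
apply: step_reach; exists t; first by rewrite /= inE Ht orbT.
split => v; rewrite /madd flC_trM_in // ?flC_trM_out //.
- by have := H1 v; count_lia.
- by rewrite H2; have := H1 v; count_lia.
Qed.

(* Tokens of N on n are represented by tokens on the outputs of M. *)
Definition embedN (x : marking V) : marking V := fun v =>
  if v \in nodes M then x n * (v \in outp M) else if v == n then 0 else x v.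

(* A step of N is simulated by firing it in N ⊗_n M and, if it puts a token
   on n, running one instance of M to completion. *)
Lemma stepN_C x y : step N x y -> reach C (embedN x) (embedN y).
Proof.
move=> [t Ht [H1 H2]].
have tN := tr_nodes Ht.
have Htn : t != n by apply/eqP => E; subst t; case: (petri_pl_tr petriN n_pl Ht).
pose z : marking V := fun v =>
  if v \in nodes M then (x n - fl N n t) * (v \in outp M) else if v == n then 0 else y v.
apply: (@reach_trans _ _ _ (madd z (kset (fl N t n) (inp M)))).
  apply: step_reach; exists t; first by rewrite /= !inE Htn Ht.
  split => v; rewrite /embedN /madd /z /kset; case vM: (v \in nodes M).
  - rewrite flC_N_in // (flN_M_l _ vM) /=; have := H1 n.
    case: (v \in outp M); case: (fl N n t) => /=; count_lia.
  - case: eqP => [->|/eqP vn]; first by rewrite flC_from_n.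
    rewrite flC_N_in // vn (notM_outpM vM) /= andbT orbF; have := H1 v.
    by case: (fl N v t) => /=; count_lia.
  - rewrite flC_N_in // flC_N_out // (flN_M_l _ vM) (flN_M_r _ vM) /=; have := H1 n.
    case: (v \in outp M); case: (fl N n t); case: (v \in inp M); case: (fl N t n) => /=;
      count_lia.
  - case: eqP => [->|/eqP vn]; first by rewrite flC_from_n flC_to_n (notM_inpM n_notM); count_lia.
    rewrite flC_N_in // flC_N_out // vn (notM_outpM vM) (notM_inpM vM) /= !andbT !andbF !orbF H2.
    by count_lia.
apply: (@reach_trans _ _ _ (madd z (kset (fl N t n) (outp M)))).
  exact/reachM_C/sound_single_run.
suff -> : madd z (kset (fl N t n) (outp M)) = embedN y by exact: reach_self.
apply: marking_ext => v; rewrite /madd /z /kset /embedN; case vM: (v \in nodes M).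
- rewrite H2; have := H1 n.
  case: (v \in outp M); case: (fl N n t); case: (fl N t n) => /=; count_lia.
- case: eqP => [->|/eqP vn]; last by rewrite (notM_outpM vM); count_lia.
  by rewrite (notM_outpM n_notM); count_lia.
Qed.

Lemma insideM_outpC m k' :
  insideM M (madd m (kset k' (outp C))) =
  madd (insideM M m) (kset (k' * (n \in outp N)) (outp M)).
Proof.
apply: marking_ext => v; rewrite /madd /insideM /kset; case vM: (v \in nodes M).
  by rewrite outpC_M //; case: (n \in outp N); case: (v \in outp M) => /=; lia.
by rewrite notM_outpM // muln0.
Qed.

Lemma viewN_outpC m k' c :
  viewN (madd m (kset k' (outp C))) (c + k' * (n \in outp N)) =
  madd (viewN m c) (kset k' (outp N)).
Proof.
apply: marking_ext => v; rewrite /madd /viewN /kset; case vM: (v \in nodes M).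
  by rewrite M_outpN //; lia.
by case: eqP => [->|/eqP vn]; [lia | rewrite outpC_N].
Qed.

Lemma embedN_viewN m c : m n = 0 ->
  embedN (viewN m c) = madd (outsideM M m) (kset c (outp M)).
Proof.
move=> mn; apply: marking_ext => v.
rewrite /madd /outsideM /kset /embedN /viewN n_notM eqxx; case vM: (v \in nodes M).
  by lia.
case: (eqVneq v n) => [->|vn]; first by rewrite mn (notM_outpM n_notM); lia.
by rewrite notM_outpM //; lia.
Qed.

Lemma embedN_outp c : embedN (kset c (outp N)) = kset c (outp C).
Proof.
apply: marking_ext => v; rewrite /kset /embedN; case vM: (v \in nodes M).
  by rewrite outpC_M //; case: (n \in outp N); case: (v \in outp M) => /=; lia.
by case: eqP => [->|/eqP vn]; [rewrite outpC_n; lia | rewrite outpC_N].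
Qed.

(* Place case: from a reachable m' + k'.O, first let every running instance
   of M terminate, then complete the explaining run of N by simulation. *)
Theorem place_sound : psub_sound C.
Proof.
move=> k k' m' Hk R.
set e := k' * (n \in outp N).
have m'n : m' n = 0.
  by have := reachC_n R; rewrite /madd /kset inpC_n outpC_n; lia.
have [j [l [Hlj [RN RM]]]] := place_inv_reach R.
have {}RM : reach M (kset j (inp M)) (madd (insideM M m') (kset (l + e) (outp M))).
  by rewrite addnC kset_add -madd_assoc /e -insideM_outpC.
have Hle : l + e <= j := sound_output_bound soundM outpM0 postM RM.
have RM' := soundM Hle RM.
have {}RN : reach N (kset k (inp N)) (madd (viewN m' (j - (l + e))) (kset k' (outp N))).
  by rewrite -viewN_outpC; have -> : j - (l + e) + e = j - l by lia.
have RN' := reach_sim stepN_C (soundN Hk RN).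
rewrite embedN_viewN // embedN_outp in RN'.
rewrite {1}(split_inside_outside M m').
exact: reach_trans (reachM_C _ RM') RN'.
Qed.

End PlaceCase.

Section TransitionCase.
Hypotheses (n_tr : n \in tr N) (n_notin_inpN : n \notin inp N)
  (n_notin_outpN : n \notin outp N) (postM : has_postsets (pc M))
  (soundN : psub_sound N) (soundM : psub_sound (pc M)).

Lemma flN_n_tr t : t \in tr N -> fl N n t = false.
Proof.
move=> Ht; apply/negP => F; case: (petri_pl_tr petriN (petri_fl_to_tr petriN F Ht) n_tr).
Qed.
Lemma flN_tr_n t : t \in tr N -> fl N t n = false.
Proof.
move=> Ht; apply/negP => F; case: (petri_pl_tr petriN (petri_fl_from_tr petriN F Ht) n_tr).
Qed.

Lemma flC_trN_in t v : t \in tr N -> t != n -> fl C v t = fl N v t.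
Proof.
move=> Ht tn; rewrite flC_N_in ?tr_nodes // flN_n_tr // andbF orbF.
by case: (eqVneq v n) => [->|]; rewrite ?flN_n_tr ?andbT.
Qed.
Lemma flC_trN_out t v : t \in tr N -> t != n -> fl C t v = fl N t v.
Proof.
move=> Ht tn; rewrite flC_N_out ?tr_nodes // flN_tr_n // orbF.
by case: (eqVneq v n) => [->|]; rewrite ?flN_tr_n ?andbT.
Qed.

Lemma inpC_tr : inp C = inp N.
Proof. by rewrite /= (negbTE n_notin_inpN). Qed.
Lemma outpC_tr : outp C = outp N.
Proof. by rewrite /= (negbTE n_notin_outpN). Qed.

Definition toPC (m : marking V) : marking (V + bool)%type :=
  fun x => if x is inl v then insideM M m v else 0.

(* The marking of N obtained from m by undoing c pending firings of n,
   i.e. putting their consumed tokens back on the preset of n. *)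
Definition undoN (m : marking V) (c : nat) : marking V :=
  fun v => outsideM M m v + c * fl N v n.

(* Key invariant of the transition case: n has been "started" j times
   (each start runs an instance of pc(M)), l of which have terminated.
   Undoing the j - l unfinished firings of n explains m as a marking of N. *)
Definition trans_inv (k : nat) (m : marking V) : Prop :=
  exists j l, l <= j /\
    reach N (kset k (inp N)) (undoN m (j - l)) /\
    reach (pc M) (kset j (inp (pc M))) (madd (toPC m) (kset l (outp (pc M)))).

Lemma trans_inv_init k : trans_inv k (kset k (inp C)).
Proof.
rewrite inpC_tr; exists 0, 0; split => //; split.
- suff -> : undoN (kset k (inp N)) (0 - 0) = kset k (inp N) by exact: reach_self.
  apply: marking_ext => v; rewrite /undoN /outsideM /kset.
  by case vM: (v \in nodes M); [rewrite M_inpN // | ]; lia.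
- suff -> : madd (toPC (kset k (inp N))) (kset 0 (outp (pc M))) = kset 0 (inp (pc M)).
    exact: reach_self.
  apply: marking_ext => [[v|b]]; rewrite /madd /toPC /insideM /kset; last by lia.
  by case vM: (v \in nodes M); [rewrite M_inpN // | ]; lia.
Qed.

Lemma trans_inv_stepN k a b t : t \in tr N -> t != n ->
  (forall v, (fl C v t : nat) <= a v) ->
  (forall v, b v = a v - fl C v t + fl C t v) ->
  trans_inv k a -> trans_inv k b.
Proof.
move=> HtN Htn H1 H2 [j [l [Hlj [RN RM]]]].
exists j, l; split => //; split.
- apply: (reach_trans RN); apply: step_reach; exists t => //; split => v;
    rewrite /undoN /outsideM; case vM: (v \in nodes M).
  + by rewrite flN_M_l.
  + by have := H1 v; rewrite flC_trN_in //; count_lia.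
  + by rewrite !(flN_M_l _ vM) (flN_M_r _ vM); count_lia.
  + by rewrite H2 flC_trN_in // flC_trN_out //; have := H1 v; rewrite flC_trN_in //; count_lia.
- suff -> : toPC b = toPC a by [].
  apply: marking_ext => [[v|//]]; rewrite /toPC /insideM; case vM: (v \in nodes M) => //.
  by rewrite H2 flC_trN_in // flC_trN_out // flN_M_l // flN_M_r; count_lia.
Qed.

(* A transition t of M fires, within pc(M), after a fresh start token is
   supplied on p_i if t is an input of M (the start of n was already paid
   for in N); it produces on p_o if t is an output of M. *)
Lemma trans_stepM_PC a b t l : t \in tr M ->
  (forall v, (fl C v t : nat) <= a v) ->
  (forall v, b v = a v - fl C v t + fl C t v) ->
  step (pc M) (madd (madd (toPC a) (kset l (outp (pc M)))) (kset (t \in inp M) (inp (pc M))))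
              (madd (toPC b) (kset (l + (t \in outp M)) (outp (pc M)))).
Proof.
move=> HtM H1 H2; have tM := tr_nodes HtM.
exists (inl t); first by rewrite /pc inE.
split => [[v|[]]|[v|[]]]; rewrite /madd /toPC /insideM /kset /= !in_set1 /=.
- case vM: (v \in nodes M); last by rewrite flM_notM_l.
  by have := H1 v; rewrite flC_M_in //; case: (fl M v t) => /=; count_lia.
- by count_lia.
- by count_lia.
- case vM: (v \in nodes M); last by rewrite flM_notM_l // flM_notM_r //; count_lia.
  rewrite H2 flC_M_in // flC_M_out // flN_M_l // flN_M_r // !andbF !orbF.
  by have := H1 v; rewrite flC_M_in // flN_M_l //= orbF; count_lia.
- by count_lia.
- by count_lia.
Qed.

(* A transition of M: the instance advances in pc(M); if it starts an
   instance, the counter j grows; if it ends one, n completes its firing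
   in N and the counter l grows. *)
Lemma trans_inv_stepM k a b t : t \in tr M ->
  (forall v, (fl C v t : nat) <= a v) ->
  (forall v, b v = a v - fl C v t + fl C t v) ->
  trans_inv k a -> trans_inv k b.
Proof.
move=> HtM H1 H2 [j [l [Hlj [RN RM]]]].
have RM1 := reach_madd (kset (t \in inp M) (inp (pc M))) RM; rewrite -kset_add in RM1.
have RM2 := reach_trans RM1 (step_reach (trans_stepM_PC l HtM H1 H2)).
have Hb : l + (t \in outp M) <= j + (t \in inp M).
  apply: (sound_output_bound soundM _ postM RM2).
  by apply/set0Pn; exists (inr true); rewrite /pc inE.
exists (j + (t \in inp M)), (l + (t \in outp M)); split => //; split => //.
have tM := tr_nodes HtM.
case Hbo: (t \in outp M).
- apply: (reach_trans RN); apply: step_reach; exists n => //; split => v;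
    rewrite /undoN /outsideM; case vM: (v \in nodes M).
  + by rewrite flN_M_l.
  + move: Hb; rewrite Hbo; have := H1 v; rewrite flC_M_in // flM_notM_l //=.
    by case: (fl N v n); case: (t \in inp M) => /=; count_lia.
  + by rewrite !(flN_M_l _ vM) (flN_M_r _ vM); count_lia.
  + move: Hb; rewrite Hbo H2 flC_M_in // flC_M_out // flM_notM_l // flM_notM_r // Hbo /=.
    have := H1 v; rewrite flC_M_in // flM_notM_l //=.
    by case: (fl N v n); case: (fl N n v); case: (t \in inp M) => /=; count_lia.
- suff -> : undoN b (j + (t \in inp M) - (l + false)) = undoN a (j - l) by [].
  apply: marking_ext => v; rewrite /undoN /outsideM; case vM: (v \in nodes M).
    by rewrite (flN_M_l _ vM) !muln0.
  rewrite H2 flC_M_in // flC_M_out // flM_notM_l // flM_notM_r // Hbo /=.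
  have := H1 v; rewrite flC_M_in // flM_notM_l //=.
  by case: (fl N v n); case: (t \in inp M) => /=; count_lia.
Qed.

Lemma trans_inv_reach k m : reach C (kset k (inp C)) m -> trans_inv k m.
Proof.
move=> R; apply: (reach_invariant _ R (trans_inv_init k)).
move=> a b [t]; rewrite /= !inE => /orP[/andP[tn tN]|tM] [H1 H2].
- exact: trans_inv_stepN H1 H2.
- exact: trans_inv_stepM H1 H2.
Qed.

(* Markings of pc(M) as markings of N ⊗_n M: a token on p_i (p_o) stands
   for the preset (postset) of n; z gives the marking outside M. *)
Definition embedPC (z : marking V) (x : marking (V + bool)%type) : marking V := fun v =>
  (if v \in nodes M then x (inl v) else z v) + x (inr false) * fl N v n
  + x (inr true) * fl N n v.

Lemma reachPC_C z x y : reach (pc M) x y -> reach C (embedPC z x) (embedPC z y).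
Proof.
apply: reach_sim => {}x {}y [[t|b] Ht [H1 H2]]; last by move: Ht; rewrite /pc inE.
have HtM : t \in tr M by move: Ht; rewrite /pc inE.
have tM := tr_nodes HtM.
apply: step_reach; exists t; first by rewrite /= inE HtM orbT.
split => v; rewrite /embedPC flC_M_in // ?flC_M_out //.
- case vM: (v \in nodes M).
  + by rewrite flN_M_l // flN_M_r //= orbF; have := H1 (inl v); rewrite /=; count_lia.
  + rewrite flM_notM_l //=; have := H1 (inr false); rewrite /=.
    by case: (fl N v n); case: (t \in inp M) => /=; count_lia.
- rewrite !H2 /=; case vM: (v \in nodes M).
  + rewrite flN_M_l // flN_M_r //= !orbF !andbF; have := H1 (inl v); rewrite /=; count_lia.
  + rewrite flM_notM_l // flM_notM_r //=; have := H1 (inr false); rewrite /=.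
    by case: (fl N v n); case: (fl N n v); case: (t \in inp M); case: (t \in outp M) => /=;
      count_lia.
Qed.

(* A step of N is simulated in N ⊗_n M: directly for t != n, and by a
   complete run of pc(M) for t = n. *)
Lemma stepN_C_tr x y : step N x y -> reach C (outsideM M x) (outsideM M y).
Proof.
move=> [t Ht [H1 H2]].
case: (eqVneq t n) => [Etn|Htn].
- subst t; pose z : marking V := fun v => x v - fl N v n.
  have -> : outsideM M x = embedPC z (kset 1 (inp (pc M))).
    apply: marking_ext => v; rewrite /embedPC /z /outsideM /kset /= !in_set1 /=.
    case vM: (v \in nodes M); first by rewrite flN_M_l // flN_M_r; count_lia.
    by have := H1 v; count_lia.
  have -> : outsideM M y = embedPC z (kset 1 (outp (pc M))).
    apply: marking_ext => v; rewrite /embedPC /z /outsideM /kset /= !in_set1 /=.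
    case vM: (v \in nodes M); first by rewrite flN_M_l // flN_M_r; count_lia.
    by rewrite H2; have := H1 v; count_lia.
  exact/reachPC_C/(sound_single_run soundM true).
- apply: step_reach; exists t; first by rewrite /= !inE Htn Ht.
  split => v; rewrite /outsideM flC_trN_in // ?flC_trN_out //; case vM: (v \in nodes M).
  + by rewrite flN_M_l.
  + exact: H1.
  + by rewrite !(flN_M_l _ vM) (flN_M_r _ vM); count_lia.
  + exact: H2.
Qed.

Definition preN (c : nat) : marking V := fun v => c * fl N v n.
Definition postN (c : nat) : marking V := fun v => c * fl N n v.

Lemma fire_n_repeatedly c Y : reach N (madd Y (preN c)) (madd Y (postN c)).
Proof.
elim: c Y => [|c IH] Y.
  suff -> : madd Y (preN 0) = madd Y (postN 0) by exact: reach_self.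
  by apply: marking_ext => v; rewrite /madd /preN /postN; lia.
apply: (@reach_trans _ _ _ (madd (madd Y (postN 1)) (preN c))).
  by apply: step_reach; exists n => //; split => v; rewrite /madd /preN /postN; lia.
suff -> : madd Y (postN c.+1) = madd (madd Y (postN 1)) (postN c) by apply: IH.
by apply: marking_ext => v; rewrite /madd /postN; lia.
Qed.

Lemma toPC_outpN m k' : toPC (madd m (kset k' (outp N))) = toPC m.
Proof.
apply: marking_ext => [[v|//]]; rewrite /toPC /insideM /madd /kset.
by case vM: (v \in nodes M); [rewrite M_outpN // | ]; lia.
Qed.

Lemma undoN_outpN m k' c :
  undoN (madd m (kset k' (outp N))) c =
  madd (madd (outsideM M m) (preN c)) (kset k' (outp N)).
Proof.
apply: marking_ext => v; rewrite /undoN /outsideM /madd /preN /kset.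
by case vM: (v \in nodes M); [rewrite M_outpN ?flN_M_l // | ]; lia.
Qed.

Lemma embedPC_toPC m : embedPC m (toPC m) = m.
Proof.
apply: marking_ext => v; rewrite /embedPC /toPC /insideM; case: (v \in nodes M); lia.
Qed.

Lemma embedPC_outp m c :
  embedPC m (kset c (outp (pc M))) = outsideM M (madd (outsideM M m) (postN c)).
Proof.
apply: marking_ext => v; rewrite /embedPC /outsideM /madd /kset /postN /= !in_set1 /=.
by case vM: (v \in nodes M); [rewrite flN_M_l ?flN_M_r // | ]; lia.
Qed.

Lemma outsideM_outpN c : outsideM M (kset c (outp N)) = kset c (outp N).
Proof.
apply: marking_ext => v; rewrite /outsideM /kset.
by case vM: (v \in nodes M); [rewrite M_outpN // | ]; lia.
Qed.

(* Transition case: let the running instances of pc(M) terminate, complete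
   the pending firings of n in N, and finish by simulating N. *)
Theorem trans_sound : psub_sound C.
Proof.
move=> k k' m' Hk R.
have [j [l [Hlj [RN RM]]]] := trans_inv_reach R.
rewrite outpC_tr toPC_outpN in RM; rewrite outpC_tr undoN_outpN in RN.
have RM' := soundM Hlj RM.
have RN' := soundN Hk (reach_trans RN
  (reach_madd (kset k' (outp N)) (fire_n_repeatedly (j - l) (outsideM M m')))).
have RC := reachPC_C m' RM'; rewrite embedPC_toPC embedPC_outp in RC.
apply: (reach_trans RC); rewrite outpC_tr -outsideM_outpN.
exact (reach_sim stepN_C_tr RN').
Qed.

End TransitionCase.

Section Structure.
Hypotheses (connN : wf_connected N) (connM : wf_connected M) (inpM0 : inp M != set0).

Lemma M_io_path : exists i o, [/\ i \in inp M, o \in outp M & connect (fl M) i o].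
Proof.
have [i Hi] := set0Pn _ inpM0.
have [o Ho Co] := connM.2 i (inpM_nodes Hi).
by exists i, o.
Qed.

Lemma connect_M_C a b : connect (fl M) a b -> connect (fl C) a b.
Proof. by apply: connect_sub => x y F; apply: connect1; rewrite /= F orbT. Qed.

(* A path of N not ending in n is rebuilt in N ⊗_n M by routing every
   passage through n along an input-output path of M. *)
Lemma path_N_C p a : path (fl N) a p -> last a p != n ->
  (a != n -> connect (fl C) a (last a p)) /\
  (a = n -> forall o, o \in outp M -> connect (fl C) o (last a p)).
Proof.
elim: p a => [|y p IH] a /=.
  by move=> _ Hb; split => [_|E]; [exact: connect0 | by rewrite E eqxx in Hb].
move=> /andP[Hay Hp] Hb; have [IH1 IH2] := IH y Hp Hb.
split.
- move=> Ha; case: (eqVneq y n) => [Eyn|Hyn].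
  + have [i [o [Hi Ho Cio]]] := M_io_path.
    apply: (connect_trans (y := i)); first by apply: connect1; rewrite /= -Eyn Hay Hi !orbT.
    apply: (connect_trans (y := o)); first exact: connect_M_C.
    exact: IH2.
  + apply: (connect_trans (y := y)); last exact: IH1.
    by apply: connect1; rewrite /= Hay Ha Hyn.
- move=> Ean o Ho; subst a.
  have Hyn : y != n by apply/eqP => E; subst y; rewrite petri_no_loop in Hay.
  apply: (connect_trans (y := y)); last exact: IH1.
  by apply: connect1; rewrite /= Ho Hay !orbT.
Qed.

Lemma connect_N_C a b : a != n -> b != n -> connect (fl N) a b -> connect (fl C) a b.
Proof.
move=> Ha Hb /connectP [p Hp Eb]; subst b.
exact: (path_N_C Hp Hb).1 Ha.
Qed.

Lemma nodesC_cases x : x \in nodes C -> (x \in nodes N) && (x != n) || (x \in nodes M).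
Proof.
rewrite /nodes /= !inE.
by case: (x \in pl N); case: (x \in tr N); case: (x \in pl M); case: (x \in tr M); case: (x != n).
Qed.

Lemma subst_from_input x : x \in nodes C -> exists2 i, i \in inp C & connect (fl C) i x.
Proof.
case/nodesC_cases/orP => [/andP[xN xn]|xM].
- have [i Hi Ci] := connN.1 x xN.
  case: (eqVneq i n) => [Ein|Hin].
  + subst i; have [z Hnz Czx] := first_step Ci xn.
    have Hzn : z != n by apply/eqP => E; subst z; rewrite petri_no_loop in Hnz.
    have [i [o [Hi' Ho Cio]]] := M_io_path.
    exists i; first by rewrite /= Hi !inE Hi' orbT.
    apply: (connect_trans (y := o)); first exact: connect_M_C.
    apply: (connect_trans (y := z)); first by apply: connect1; rewrite /= Ho Hnz !orbT.
    exact: connect_N_C.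
  + exists i; last exact: connect_N_C.
    by rewrite /=; case: ifP => _; rewrite // !inE Hin Hi.
- have [j Hj Cj] := connM.1 x xM.
  case Hn: (n \in inp N).
  + by exists j; [rewrite /= Hn !inE Hj orbT | exact: connect_M_C].
  + have [i Hi Ci] := connN.1 n n_nodesN.
    have Hin : i != n by apply/eqP => E; subst i; rewrite Hi in Hn.
    have [p [Cp Fp Np]] := last_step Ci Hin.
    exists i; first by rewrite /= Hn.
    apply: (connect_trans (y := p)); first exact: connect_N_C.
    apply: (connect_trans (y := j)); first by apply: connect1; rewrite /= Fp Hj !orbT.
    exact: connect_M_C.
Qed.

Lemma subst_to_output x : x \in nodes C -> exists2 o, o \in outp C & connect (fl C) x o.
Proof.
case/nodesC_cases/orP => [/andP[xN xn]|xM].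
- have [o Ho Co] := connN.2 x xN.
  case: (eqVneq o n) => [Eon|Hon].
  + subst o; have [p [Cp Fp Np]] := last_step Co xn.
    have [i [o [Hi' Ho' Cio]]] := M_io_path.
    exists o; first by rewrite /= Ho !inE Ho' orbT.
    apply: (connect_trans (y := p)); first exact: connect_N_C.
    apply: (connect_trans (y := i)); first by apply: connect1; rewrite /= Fp Hi' !orbT.
    exact: connect_M_C.
  + exists o; last exact: connect_N_C.
    by rewrite /=; case: ifP => _; rewrite // !inE Hon Ho.
- have [j Hj Cj] := connM.2 x xM.
  case Hn: (n \in outp N).
  + by exists j; [rewrite /= Hn !inE Hj orbT | exact: connect_M_C].
  + have [o Ho Co] := connN.2 n n_nodesN.
    have Hon : o != n by apply/eqP => E; subst o; rewrite Ho in Hn.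
    have [z Fz Cz] := first_step Co Hon.
    have Hzn : z != n by apply/eqP => E; subst z; rewrite petri_no_loop in Fz.
    exists o; first by rewrite /= Hn.
    apply: (connect_trans (y := j)); first exact: connect_M_C.
    apply: (connect_trans (y := z)); first by apply: connect1; rewrite /= Hj Fz !orbT.
    exact: connect_N_C.
Qed.

End Structure.

(* N ⊗_n M is again a Petri net: the new arcs connect presets/postsets of n
   with the inputs/outputs of M, which have the same kind as n. *)
Lemma subst_petri : is_petri C.
Proof.
split.
- apply/setP => x; rewrite inE in_set0 /= !inE; apply/negP => /andP[H1 H2].
  case/orP: H1 => [/andP[_ Hp]|Hp]; case/orP: H2 => [/andP[_ Ht]|Ht].
  + case: (petri_pl_tr petriN Hp Ht).
  + by have := nodesN_notM (pl_nodes Hp); rewrite (tr_nodes Ht).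
  + by have := nodesN_notM (tr_nodes Ht); rewrite (pl_nodes Hp).
  + case: (petri_pl_tr petriM Hp Ht).
- move=> x y; rewrite /= !inE; case/or4P.
  + move=> /and3P[F xn yn]; rewrite xn yn /=.
    by case/orP: (petri_fl petriN F) => /andP[-> ->]; [left|right].
  + move=> F.
    by case/orP: (petri_fl petriM F) => /andP[-> ->]; [left|right]; rewrite !orbT.
  + move=> /andP[F Hy].
    have xn : x != n by apply/eqP => E; subst x; rewrite petri_no_loop in F.
    case: kindNM => [[Hn [Hi _]]|[Hn [Hi _]]].
    * by right; rewrite xn (petri_fl_to_pl petriN F Hn) (subsetP Hi _ Hy) !orbT.
    * by left; rewrite xn (petri_fl_to_tr petriN F Hn) (subsetP Hi _ Hy) !orbT.
  + move=> /andP[Hx F].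
    have yn : y != n by apply/eqP => E; subst y; rewrite petri_no_loop in F.
    case: kindNM => [[Hn [_ Ho]]|[Hn [_ Ho]]].
    * by left; rewrite yn (petri_fl_from_pl petriN F Hn) (subsetP Ho _ Hx) !orbT.
    * by right; rewrite yn (petri_fl_from_tr petriN F Hn) (subsetP Ho _ Hx) !orbT.
Qed.

End Substitution.

Lemma WF_facts (V : finType) (N : wfnet V) : is_WF N ->
  [/\ is_petri N, inp N != set0, outp N != set0, wf_connected N &
      inp N \subset nodes N /\ outp N \subset nodes N].
Proof.
have sub_nodes (S : {set V}) : (S \subset pl N) || (S \subset tr N) -> S \subset nodes N.
  by case/orP => H; apply/subsetP => x /(subsetP H) Hx; rewrite /nodes inE Hx ?orbT.
case=> [[P [i0 [o0 [Hi [Ho Hc]]]]] | [P [i0 [o0 [Hi [Ho Hc]]]]]];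
  by split => //; split; apply: sub_nodes; rewrite ?Hi ?Ho ?orbT.
Qed.

Lemma pWF_not_tWF (X : finType) (A : wfnet X) : is_pWF A -> is_tWF A -> False.
Proof.
case=> P [Hi0 [_ [Hi _]]] [_ [_ [_ [Hi' _]]]].
have [x Hx] := set0Pn _ Hi0.
case: (petri_pl_tr P (subsetP Hi _ Hx) (subsetP Hi' _ Hx)).
Qed.

(* In a WF net every transition reaches an output place, hence has an
   output arc; in pc(M) the outputs of M feed p_o. *)
Lemma pWF_postsets (X : finType) (M : wfnet X) : is_pWF M -> has_postsets M.
Proof.
case=> P [_ [_ [_ [Ho [_ Hc]]]]] t Ht.
have [o Hoo Co] := Hc t (tr_nodes Ht).
have Hot : o != t by apply/eqP => E; subst o; case: (petri_pl_tr P (subsetP Ho _ Hoo) Ht).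
by have [z Hz _] := first_step Co Hot; exists z.
Qed.

Lemma tWF_pc_postsets (X : finType) (M : wfnet X) : is_tWF M -> has_postsets (pc M).
Proof.
case=> P [_ [_ [_ [Ho [_ Hc]]]]] [t|b]; rewrite /= inE // => Ht.
have [o Hoo Co] := Hc t (tr_nodes Ht).
case: (eqVneq o t) => [E|Hot]; first by subst o; exists (inr true).
by have [z Hz _] := first_step Co Hot; exists (inl z).
Qed.

Lemma subst_set_sub (V : finType) (n : V) (S1 S2 IN IM : {set V}) :
  IN \subset S1 -> (n \in IN -> IM \subset S2) ->
  (if n \in IN then IN :\ n :|: IM else IN) \subset (S1 :\ n :|: S2).
Proof.
case: ifP => Hn H1 H2; apply/subsetP => x; rewrite !inE.
- case/orP => [/andP[-> /(subsetP H1) ->] //|/(subsetP (H2 isT)) ->]; by rewrite orbT.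
- move=> Hx; rewrite (subsetP H1 _ Hx) andbT.
  by case: (eqVneq x n) => [E|//]; subst x; rewrite Hx in Hn.
Qed.

Lemma subst_set_nonempty (V : finType) (n : V) (IN IM : {set V}) :
  IN != set0 -> IM != set0 -> (if n \in IN then IN :\ n :|: IM else IN) != set0.
Proof.
move=> HN /set0Pn [i Hi]; case: ifP => // _.
by apply/set0Pn; exists i; rewrite !inE Hi orbT.
Qed.

Lemma subst_pWF (V : finType) (N M : wfnet V) (n : V) :
  is_pWF N -> is_WF M -> [disjoint nodes N & nodes M] -> io_kind N M n ->
  is_pWF (subst N n M).
Proof.
move=> HN HM dis kind.
have [PN iN0 oN0 cN [iN oN]] := WF_facts (or_introl HN).
have [PM iM0 oM0 cM _] := WF_facts HM.
have [_ [_ [_ [iNp [oNp _]]]]] := HN.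
do !split.
- exact: (subst_petri PN PM dis kind).1.
- exact: (subst_petri PN PM dis kind).2.
- exact: subst_set_nonempty.
- exact: subst_set_nonempty.
- by apply: subst_set_sub => // /(subsetP iNp); exact: inpM_pl PN kind.
- by apply: subst_set_sub => // /(subsetP oNp); exact: outpM_pl PN kind.
- exact: subst_from_input PN kind cN cM iM0.
- exact: subst_to_output PN kind cN cM iM0.
Qed.

Lemma subst_tWF (V : finType) (N M : wfnet V) (n : V) :
  is_tWF N -> is_WF M -> [disjoint nodes N & nodes M] -> io_kind N M n ->
  is_tWF (subst N n M).
Proof.
move=> HN HM dis kind.
have [PN iN0 oN0 cN [iN oN]] := WF_facts (or_intror HN).
have [PM iM0 oM0 cM _] := WF_facts HM.
have [_ [_ [_ [iNt [oNt _]]]]] := HN.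
do !split.
- exact: (subst_petri PN PM dis kind).1.
- exact: (subst_petri PN PM dis kind).2.
- exact: subst_set_nonempty.
- exact: subst_set_nonempty.
- by apply: subst_set_sub => // /(subsetP iNt); exact: inpM_tr PN kind.
- by apply: subst_set_sub => // /(subsetP oNt); exact: outpM_tr PN kind.
- exact: subst_from_input PN kind cN cM iM0.
- exact: subst_to_output PN kind cN cM iM0.
Qed.

Lemma psub_sound_eq (X : finType) (A B : wfnet X) :
  tr A = tr B -> fl A =2 fl B -> inp A = inp B -> outp A = outp B ->
  psub_sound A -> psub_sound B.
Proof.
move=> Et Ef Ei Eo HA.
have SAB a b : step B a b -> reach A a b.
  by move=> [t Ht [H1 H2]]; apply: step_reach; exists t; [rewrite Et | split => v; rewrite !Ef].
have SBA a b : step A a b -> reach B a b.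
  by move=> [t Ht [H1 H2]]; apply: step_reach; exists t; [rewrite -Et | split => v; rewrite -!Ef].
move=> k k' m' Hk R.
have R' := reach_sim (f := id) SAB R; rewrite /= -Ei -Eo in R'.
have := HA k k' m' Hk R'; rewrite Eo => R2.
exact: (reach_sim (f := id) SBA R2).
Qed.

(* Sub-soundness transfers along an injective renaming e of the nodes of A
   onto (the nodes of) B that preserves transitions, flow and inputs and
   outputs; tokens are pulled back along e and pushed forward again. *)
Section Transport.
Variables (X Y : finType) (A : wfnet X) (B : wfnet Y) (e : X -> Y).
Hypotheses (e_inj : injective e)
  (e_tr : forall x, (e x \in tr B) = (x \in tr A))
  (e_tr_onto : forall y, y \in tr B -> exists x, y = e x)
  (e_fl : forall a b, fl B (e a) (e b) = fl A a b)
  (e_fl_onto : forall y y', fl B y y' -> (exists x, y = e x) /\ (exists x, y' = e x))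
  (e_inp : forall x, (e x \in inp B) = (x \in inp A))
  (e_inp_onto : forall y, y \in inp B -> exists x, y = e x)
  (e_outp : forall x, (e x \in outp B) = (x \in outp A))
  (e_outp_onto : forall y, y \in outp B -> exists x, y = e x).

Definition push (a : marking X) (z : marking Y) : marking Y := fun y =>
  match [pick x | e x == y] with Some x => a x | None => z y end.

Lemma push_e a z x : push a z (e x) = a x.
Proof.
rewrite /push; case: pickP => [x' /eqP /e_inj -> //|H].
by have := H x; rewrite eqxx.
Qed.

Lemma push_ne a z y : (forall x, e x != y) -> push a z y = z y.
Proof. by move=> H; rewrite /push; case: pickP => [x' E|//]; have := H x'; rewrite E. Qed.

Lemma image_dec y : (exists x, y = e x) \/ (forall x, e x != y).
Proof.
case: (pickP (fun x => e x == y)) => [x /eqP <-|H]; first by left; exists x.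
by right => x; rewrite H.
Qed.

Lemma step_pull a b : step B a b -> step A (fun x => a (e x)) (fun x => b (e x)).
Proof.
move=> [t Ht [H1 H2]]; have [t0 Et] := e_tr_onto Ht; subst t.
exists t0; first by rewrite -e_tr.
by split => v; [rewrite -e_fl; exact: H1 | rewrite H2 !e_fl].
Qed.

Lemma step_push a b z : step A a b -> step B (push a z) (push b z).
Proof.
move=> [t Ht [H1 H2]]; exists (e t); first by rewrite e_tr.
split => y; case: (image_dec y) => [[x ->]|Hy].
- by rewrite e_fl push_e.
- case F: (fl B y (e t)) => //.
  by have [[x Ex] _] := e_fl_onto F; have := Hy x; rewrite Ex eqxx.
- by rewrite !push_e H2 !e_fl.
- rewrite !push_ne //.
  case F1: (fl B y (e t)); first by have [[x Ex] _] := e_fl_onto F1; have := Hy x; rewrite Ex eqxx.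
  case F2: (fl B (e t) y); first by have [_ [x Ex]] := e_fl_onto F2; have := Hy x; rewrite Ex eqxx.
  by rewrite subn0 addn0.
Qed.

Lemma outside_image_inert y : (forall x, e x != y) ->
  forall a b, reach B a b -> a y = b y.
Proof.
move=> Hy; apply: reach_inert => t Ht.
split; apply/negP => F.
- by have [[x Ex] _] := e_fl_onto F; have := Hy x; rewrite Ex eqxx.
- by have [_ [x Ex]] := e_fl_onto F; have := Hy x; rewrite Ex eqxx.
Qed.

Lemma outside_image_io y : (forall x, e x != y) ->
  (y \in inp B) = false /\ (y \in outp B) = false.
Proof.
move=> Hy; split; apply/negP.
- by move=> /e_inp_onto [x Ex]; have := Hy x; rewrite Ex eqxx.
- by move=> /e_outp_onto [x Ex]; have := Hy x; rewrite Ex eqxx.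
Qed.

Lemma transport : psub_sound A -> psub_sound B.
Proof.
move=> HA k k' m' Hk R.
have R1 := reach_sim (f := fun m x => m (e x)) (fun a b S => step_reach (step_pull S)) R.
have E1 : (fun x => kset k (inp B) (e x)) = kset k (inp A).
  by apply: marking_ext => x; rewrite /kset e_inp.
have E2 : (fun x => madd m' (kset k' (outp B)) (e x)) =
          madd (fun x => m' (e x)) (kset k' (outp A)).
  by apply: marking_ext => x; rewrite /madd /kset e_outp.
rewrite /= E1 E2 in R1.
have R2 := reach_sim (f := fun m => push m m') (fun a b S => step_reach (step_push m' S))
             (HA k k' _ Hk R1).
have m'_off y : (forall x, e x != y) -> m' y = 0.
  move=> Hy; have := outside_image_inert Hy R.
  by have [Hi Ho] := outside_image_io Hy; rewrite /kset /madd Hi Ho; lia.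
have E3 : push (fun x => m' (e x)) m' = m'.
  apply: marking_ext => y; case: (image_dec y) => [[x ->]|Hy]; first by rewrite push_e.
  by rewrite push_ne.
have E4 : push (kset (k - k') (outp A)) m' = kset (k - k') (outp B).
  apply: marking_ext => y; case: (image_dec y) => [[x ->]|Hy].
    by rewrite push_e /kset e_outp.
  have [_ Ho] := outside_image_io Hy.
  by rewrite push_ne // m'_off // /kset Ho; lia.
by rewrite /= E3 E4 in R2.
Qed.

End Transport.

(* A net on V viewed as a net on V + bool (the universe of place completions). *)
Definition lset (V : finType) (A : {set V}) : {set (V + bool)%type} :=
  [set x | if x is inl v then v \in A else false].

Lemma lset_sub (V : finType) (A B : {set V}) : A \subset B -> lset A \subset lset B.
Proof. by move=> H; apply/subsetP => x; rewrite /lset !inE; case: x => // v /(subsetP H). Qed.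

Lemma lset0 (V : finType) (A : {set V}) : A != set0 -> lset A != set0.
Proof. by move=> /set0Pn [v Hv]; apply/set0Pn; exists (inl v); rewrite /lset inE. Qed.

Definition liftN (V : finType) (M : wfnet V) : wfnet (V + bool)%type :=
  {| pl := lset (pl M); tr := lset (tr M);
     fl := fun x y => match x, y with inl a, inl b => fl M a b | _, _ => false end;
     inp := lset (inp M); outp := lset (outp M) |}.

Lemma lift_petri (V : finType) (M : wfnet V) : is_petri M -> is_petri (liftN M).
Proof.
move=> P; split.
- apply/setP => [[v|b]]; rewrite inE in_set0 /= /lset /= !inE //.
  by apply/negP => /andP[H1 H2]; case: (petri_pl_tr P H1 H2).
- move=> [a|//] [b|//] /= F; rewrite /lset /= !inE.
  by case/orP: (petri_fl P F) => /andP[-> ->]; [left|right].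
Qed.

Lemma lift_postsets (V : finType) (M : wfnet V) :
  has_postsets M -> has_postsets (liftN M).
Proof. by move=> H [t|b]; rewrite /lset /= inE // => /H [y Hy]; exists (inl y). Qed.

Lemma lift_sound (V : finType) (M : wfnet V) : psub_sound M -> psub_sound (liftN M).
Proof.
apply: (@transport _ _ M (liftN M) inl).
- by move=> x y [].
- by move=> x; rewrite /lset /= inE.
- by move=> [v|b]; rewrite /lset /= inE // => _; exists v.
- by [].
- by move=> [a|a] [b|b] //= _; split; [exists a|exists b].
- by move=> x; rewrite /lset /= inE.
- by move=> [v|b]; rewrite /lset /= inE // => _; exists v.
- by move=> x; rewrite /lset /= inE.
- by move=> [v|b]; rewrite /lset /= inE // => _; exists v.
Qed.

(* pc(liftN M) is pc(M) with its nodes renamed along eL. *)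
Definition eL (V : finType) (x : (V + bool)%type) : ((V + bool) + bool)%type :=
  match x with inl v => inl (inl v) | inr b => inr b end.

Lemma eL_inj (V : finType) : injective (@eL V).
Proof. by move=> [a|a] [b|b] //= [->]. Qed.

Lemma pc_lift_sound (V : finType) (M : wfnet V) :
  psub_sound (pc M) -> psub_sound (pc (liftN M)).
Proof.
apply: (@transport _ _ (pc M) (pc (liftN M)) (@eL V)).
- exact: eL_inj.
- by move=> [v|b]; rewrite /= !inE.
- by move=> [[v|b]|b]; rewrite /= !inE // => _; exists (inl v).
- by move=> [a|[]] [b|[]]; rewrite /= /lset /= ?inE.
- move=> [[a|a]|c] [[b|b]|d] //=; rewrite /lset /= ?inE //.
  + by move=> _; split; [exists (inl a)|exists (inl b)].
  + by move=> _; split; [exists (inl a)|exists (inr d)].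
  + by case: d.
  + by move=> _; split; [exists (inr c)|exists (inl b)].
  + by case: c.
  + by move=> _; split; [exists (inr c)|exists (inr d)].
- by move=> [v|[]]; rewrite /= !in_set1.
- by move=> [[v|b]|b]; rewrite /= in_set1 // => /eqP ->; exists (inr false).
- by move=> [v|[]]; rewrite /= !in_set1.
- by move=> [[v|b]|b]; rewrite /= in_set1 // => /eqP ->; exists (inr true).
Qed.

Lemma pc_lift_postsets (V : finType) (M : wfnet V) :
  has_postsets (pc M) -> has_postsets (pc (liftN M)).
Proof.
move=> H [[v|b]|b]; rewrite /= !inE //= => Hv.
have [y Hy] : exists y, fl (pc M) (inl v) y by apply: H; rewrite inE.
by exists (eL y); move: Hy; case: y => [w|[]] //=; rewrite /lset /= ?inE.
Qed.

Lemma lift_disjoint (V : finType) (N M : wfnet V) :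
  [disjoint nodes N & nodes M] -> [disjoint nodes (pc N) & nodes (liftN M)].
Proof.
move=> H; rewrite disjoint_subset; apply/subsetP => x.
case: x => [v|b]; rewrite /nodes /lset /= !inE //= => Hv.
apply/negP => Hm.
have vN : v \in nodes N by rewrite /nodes inE.
by have := disjointFr H vN; rewrite /nodes inE Hm.
Qed.

Lemma pc_petri (V : finType) (N : wfnet V) : is_tWF N -> is_petri (pc N).
Proof.
case=> P [_ [_ [Hi [Ho _]]]]; split.
- apply/setP => [[v|b]]; rewrite !inE //=.
  by apply/negP => /andP[H1 H2]; case: (petri_pl_tr P H1 H2).
- move=> [a|[]] [b|[]] //=; rewrite !inE /=.
  + by move=> F; case/orP: (petri_fl P F) => /andP[-> ->]; [left|right].
  + by move=> H; right; rewrite (subsetP Ho _ H).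
  + by move=> H; left; rewrite (subsetP Hi _ H).
Qed.

Lemma pc_io_nodes (V : finType) (N : wfnet V) :
  inp (pc N) \subset nodes (pc N) /\ outp (pc N) \subset nodes (pc N).
Proof. by split; apply/subsetP => x; rewrite /nodes /= !inE => /eqP ->. Qed.

Lemma pc_lift_kind (V : finType) (N M : wfnet V) (n : V) :
  io_kind N M n -> io_kind (pc N) (liftN M) (inl n).
Proof.
by case=> [[Hn [Hi Ho]]|[Hn [Hi Ho]]]; [left|right];
  rewrite inE Hn; split => //; split; apply: lset_sub.
Qed.

Lemma inl_eq (A B : eqType) (a b : A) : (inl a == inl b :> (A + B)%type) = (a == b).
Proof. by apply/eqP/eqP => [[]|->]. Qed.

Section PcSubst.
Variables (V : finType) (N M : wfnet V) (n : V).

Lemma pc_subst_tr : tr (subst (pc N) (inl n) (liftN M)) = tr (pc (subst N n M)).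
Proof. by apply/setP => [[v|b]]; rewrite /= !inE /lset /= ?inE. Qed.

Lemma pc_subst_fl : fl (subst (pc N) (inl n) (liftN M)) =2 fl (pc (subst N n M)).
Proof.
move=> [a|c] [b|d]; rewrite /= /lset ?inE ?inl_eq.
- by [].
- case: d; rewrite ?andbF //=.
  case: ifP => Hn; rewrite ?inE; case: (eqVneq a n) => [E|Han];
    rewrite ?E ?Hn ?andbF ?andbT ?orbF //=.
- case: c; rewrite ?andbF //=.
  case: ifP => Hn; rewrite ?inE; case: (eqVneq b n) => [E|Hbn];
    rewrite ?E ?Hn ?andbF ?andbT ?orbF //=.
- by case: c; case: d; rewrite ?andbF.
Qed.

Lemma pc_subst_inp : inp (subst (pc N) (inl n) (liftN M)) = inp (pc (subst N n M)).
Proof. by rewrite /= in_set1. Qed.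
Lemma pc_subst_outp : outp (subst (pc N) (inl n) (liftN M)) = outp (pc (subst N n M)).
Proof. by rewrite /= in_set1. Qed.

End PcSubst.

Definition sound_component (X : finType) (A B : wfnet X) (m : X) : Prop :=
  (m \in pl A /\ outp B != set0 /\ has_postsets B /\ psub_sound B) \/
  (m \in tr A /\ m \notin inp A /\ m \notin outp A /\
   has_postsets (pc B) /\ psub_sound (pc B)).

Lemma subst_psub_sound (X : finType) (A B : wfnet X) (m : X) :
  is_petri A -> is_petri B -> [disjoint nodes A & nodes B] -> io_kind A B m ->
  inp A \subset nodes A -> outp A \subset nodes A ->
  psub_sound A -> sound_component A B m -> psub_sound (subst A m B).
Proof.
move=> PA PB dis kind iA oA sA [[mP [oB0 [postB sB]]]|[mT [mI [mO [postB sB]]]]].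
- exact: place_sound PA PB dis kind iA oA mP oB0 postB sA sB.
- exact: trans_sound PA PB dis kind iA oA mT mI mO postB sA sB.
Qed.

Lemma io_kind_of_case (V : finType) (N M : wfnet V) (n : V) :
  (n \in pl N /\ is_pWF M) \/ (n \in tr N /\ is_tWF M) -> io_kind N M n.
Proof.
by case=> [[Hn [_ [_ [_ [Hi [Ho _]]]]]]|[Hn [_ [_ [_ [Hi [Ho _]]]]]]]; [left|right].
Qed.

Section MainCases.
Variables (V : finType) (N M : wfnet V) (n : V).
Hypotheses (HM : is_WF M) (disjNM : [disjoint nodes N & nodes M])
  (soundM : sub_sound M)
  (kindNM : (n \in pl N /\ is_pWF M) \/ (n \in tr N /\ is_tWF M)).

Lemma subst_sound_of_pWF : is_pWF N -> psub_sound N -> psub_sound (subst N n M).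
Proof.
move=> HN sN.
have [PN _ _ _ [iN oN]] := WF_facts (or_introl HN).
have [PM _ oM0 _ _] := WF_facts HM.
have [_ [_ [_ [iNp [oNp _]]]]] := HN.
case: kindNM => [[nP HMp]|[nT HMt]].
- apply: subst_psub_sound => //; first exact: io_kind_of_case.
  by left; do !split => //; [exact: pWF_postsets | exact: soundM.1].
- apply: subst_psub_sound => //; first exact: io_kind_of_case.
  right; do !split => //; [| | exact: tWF_pc_postsets | exact: soundM.2].
  + by apply/negP => /(subsetP iNp) Hp; case: (petri_pl_tr PN Hp nT).
  + by apply/negP => /(subsetP oNp) Hp; case: (petri_pl_tr PN Hp nT).
Qed.

(* N a tWF net: pc(N ⊗_n M) is pc(N) ⊗_n M up to renaming, and n keeps its
   kind in pc(N) while never being an input or output of it. *)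
Lemma subst_sound_of_tWF : is_tWF N -> psub_sound (pc N) -> psub_sound (pc (subst N n M)).
Proof.
move=> HN sN.
have [PM _ oM0 _ _] := WF_facts HM.
have kind := io_kind_of_case kindNM.
have [iN oN] := pc_io_nodes N.
apply: (psub_sound_eq (pc_subst_tr N M n) (pc_subst_fl N M n)
          (pc_subst_inp N M n) (pc_subst_outp N M n)).
apply: subst_psub_sound (pc_petri HN) (lift_petri PM) (lift_disjoint disjNM)
                        (pc_lift_kind kind) iN oN sN _.
case: kindNM => [[nP HMp]|[nT HMt]].
- left; rewrite inE nP; do !split; first exact: lset0.
  + exact/lift_postsets/pWF_postsets.
  + exact/lift_sound/soundM.1.
- right; rewrite inE nT /= !in_set1; do !split.
  + exact/pc_lift_postsets/tWF_pc_postsets.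
  + exact/pc_lift_sound/soundM.2.
Qed.

End MainCases.

Theorem mainTheorem15 (V : finType) (N M : wfnet V) (n : V) :
  is_WF N -> is_WF M ->
  [disjoint nodes N & nodes M] ->
  sub_sound N -> sub_sound M ->
  (n \in pl N /\ is_pWF M) \/ (n \in tr N /\ is_tWF M) ->
  is_WF (subst N n M) /\ sub_sound (subst N n M).
Proof.
move=> HN HM dis sN sM Hcase.
have kind := io_kind_of_case Hcase.
case: HN => [HNp|HNt].
- have HC := subst_pWF HNp HM dis kind.
  split; [by left | split=> [_|HCt]]; last by case: (pWF_not_tWF HC HCt).
  exact: subst_sound_of_pWF HM dis sM Hcase HNp (sN.1 HNp).
- have HC := subst_tWF HNt HM dis kind.
  split; [by right | split=> [HCp|_]]; first by case: (pWF_not_tWF HCp HC).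
  exact: subst_sound_of_tWF HM dis sM Hcase HNt (sN.2 HNt).
Qed.
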